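(* Let $C=(1,c_2,\dots,c_n)$ be a canonical system. Then for each $1\le i\le n$, the subsystem $(1,c_2,\dots,c_i)$ is tight.
   Context: A system is a tuple $C=(c_1,\dots,c_n)$ of integers with $1=c_1<c_2<\dots<c_n$; for $k\le n$, $(c_1,\dots,c_k)$ is a subsystem. For a positive integer $v$, $\mathrm{opt}_C(v)$ is the minimum of $\sum_i x_i$ over $x\in\mathbb{Z}_{\ge0}^n$ with $\sum_i c_ix_i=v$. The greedy representation of $v$ is produced by: for $i=n$ down to $1$, while $c_i\le$ remaining value, take a coin $c_i$. $\mathrm{grd}_C(v)$ is its number of coins. A positive integer $w$ is a counterexample if $\mathrm{opt}_C(w)<\mathrm{grd}_C(w)$; $C$ is canonical if it has none, noncanonical otherwise. A system $(c_1,\dots,c_k)$ is tight if it has no counterexample smaller than $c_k$. *)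

From mathcomp Require Import all_boot.
Set Implicit Arguments. Unset Strict Implicit. Unset Printing Implicit Defensive.

(* A coin system C = (c_1,...,c_n) is represented as a seq nat (c_1 first). *)
Definition is_system (C : seq nat) : Prop :=
  head 0 C = 1 /\ sorted ltn C.

Definition subsystem (C : seq nat) (k : nat) : seq nat := take k C.

Definition is_rep (C : seq nat) (v : nat) (x : seq nat) : Prop :=
  size x = size C /\ \sum_(i < size C) nth 0 C i * nth 0 x i = v.

Definition ncoins (x : seq nat) : nat := \sum_(a <- x) a.

(* greedy: process coins from largest (c_n) down to c_1; with remaining value r,
   "while c <= r take a coin c" takes exactly r %/ c coins leaving r %% c.
   Returns (number of coins, remaining value). *)
Fixpoint greedy_desc (cs : seq nat) (r : nat) : nat * nat :=
  match cs with
  | [::] => (0, r)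
  | c :: cs' =>
      let k := r %/ c in
      let p := greedy_desc cs' (r %% c) in (k + p.1, p.2)
  end.

Definition grd (C : seq nat) (v : nat) : nat := (greedy_desc (rev C) v).1.

Definition counterexample (C : seq nat) (w : nat) : Prop :=
  0 < w /\ exists x, is_rep C w x /\ ncoins x < grd C w.

Definition canonical (C : seq nat) : Prop := forall w, ~ counterexample C w.

Definition tight (C : seq nat) : Prop :=
  forall w, w < last 0 C -> ~ counterexample C w.

From mathcomp Require Import all_boot.

Set Implicit Arguments.
Unset Strict Implicit.
Unset Printing Implicit Defensive.

(* Below its largest coin the subsystem (c_1,...,c_i) behaves like C: greedy
   never uses the larger coins c_(i+1),...,c_n, and any representation in the
   subsystem becomes one in C by giving these coins multiplicity zero.  So a
   counterexample for the subsystem smaller than c_i is one for C. *)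

Lemma greedy_desc_cat_gt (s t : seq nat) r :
  all (fun c => r < c) s -> greedy_desc (s ++ t) r = greedy_desc t r.
Proof.
elim: s => [|c s IH] //= /andP [rc rs].
by rewrite divn_small // modn_small // IH; case: (greedy_desc t r).
Qed.

Lemma sorted_drop_gt_last_take (C : seq nat) i w :
  sorted ltn C -> w < last 0 (take i C) -> all (fun c => w < c) (drop i C).
Proof.
move=> C_sorted; case/lastP: (take i C) (cat_take_drop i C) => [|s a] // C_def.
rewrite last_rcons => wa.
have : sorted ltn (a :: drop i C).
  by move: C_sorted; rewrite -{1}C_def cat_rcons => /cat_sorted2 [_ ?].
move=> /(order_path_min ltn_trans) /allP a_min.
by apply/allP => c /a_min; apply: ltn_trans.
Qed.

Lemma grd_take (C : seq nat) i w :
  sorted ltn C -> w < last 0 (take i C) -> grd (take i C) w = grd C w.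
Proof.
move=> C_sorted w_lt; rewrite /grd -{2}(cat_take_drop i C) rev_cat.
rewrite greedy_desc_cat_gt // all_rev.
exact: sorted_drop_gt_last_take w_lt.
Qed.

Lemma is_rep_cat_nseq0 (s t : seq nat) v x :
  is_rep s v x -> is_rep (s ++ t) v (x ++ nseq (size t) 0).
Proof.
move=> [size_x <-]; split; first by rewrite !size_cat size_nseq size_x.
rewrite size_cat big_split_ord /= [X in _ + X]big1 ?addn0 => [|j _].
  by apply: eq_bigr => j _; rewrite /= !nth_cat size_x ltn_ord.
by rewrite /= !nth_cat size_x ltnNge leq_addr /= addKn nth_nseq if_same muln0.
Qed.

Lemma ncoins_cat_nseq0 (x : seq nat) n : ncoins (x ++ nseq n 0) = ncoins x.
Proof. by rewrite /ncoins big_cat /= big_nseq iter_fix // addn0. Qed.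

Lemma counterexample_take (C : seq nat) i w :
  sorted ltn C -> w < last 0 (take i C) ->
  counterexample (take i C) w -> counterexample C w.
Proof.
move=> C_sorted w_lt [w_gt0 [x [x_rep x_short]]]; split=> //.
exists (x ++ nseq (size (drop i C)) 0); split.
  by rewrite -{1}(cat_take_drop i C); apply: is_rep_cat_nseq0.
by rewrite ncoins_cat_nseq0 -(grd_take C_sorted w_lt).
Qed.

Theorem lemma1 (C : seq nat) :
  is_system C -> canonical C ->
  forall i, 1 <= i <= size C -> tight (subsystem C i).
Proof.
move=> [_ C_sorted] C_canonical i _ w w_lt w_counter.
exact: C_canonical w (counterexample_take C_sorted w_lt w_counter).
Qed.
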